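(* Let $a=\alpha_0A_0+\alpha_1A_1+\alpha_2A_2+\alpha_3A_3$ with $\alpha_i\in K[X]$, where $A_0=\begin{pmatrix} h_1&0\\ 0&h_1\end{pmatrix}$, $A_1=\begin{pmatrix} 0&0\\ 0&h_1\end{pmatrix}$, $A_2=\begin{pmatrix} 0&h_2\\ -h_3&h_4\end{pmatrix}$, $A_3=\begin{pmatrix} h_4&0\\ 0&h_4\end{pmatrix}$. If $a\in F$, then $a$ is strongly central in $F$.
   Context: $K$ is an infinite field of characteristic different from 2. Let $X=\{x_1,x_2,x_1',x_2'\}$ and $Y=\{y_1,y_2,y_1',y_2'\}$, and let $K[X;Y]\cong K[X]\otimes_K E(Y)$ be the free supercommutative algebra: the $x$'s are even commuting variables, the $y$'s are odd pairwise anticommuting variables, and $E(Y)$ is the Grassmann algebra on the vector space with basis $Y$. Put $C_1=\begin{pmatrix} x_1&y_1\\ y_1'&x_1'\end{pmatrix}$, $C_2=\begin{pmatrix} x_2&y_2\\ y_2'&x_2'\end{pmatrix}$, and let $F=K[C_1,C_2]$ be the unital $K$-subalgebra of $M_2(K[X;Y])$ generated by $C_1,C_2$; elements of $K[X]$ act on matrices as scalars. Define $h_1=y_1y_2y_1'y_2'$, $h_2=y_1y_2\big(y_1'(x_2'-x_2)-y_2'(x_1'-x_1)\big)$, $h_3=y_1'y_2'\big(y_1(x_2'-x_2)-y_2(x_1'-x_1)\big)$, $h_4=\big(y_1'(x_2'-x_2)-y_2'(x_1'-x_1)\big)\big(y_1(x_2'-x_2)-y_2(x_1'-x_1)\big)$.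 An element $a\in F$ is called strongly central if $a$ is central in $F$ and $ab$ is central in $F$ for every $b\in F$. *)

From HB Require Import structures.
From mathcomp Require Import all_boot all_order all_algebra.
From mathcomp Require Import mpoly.
Set Implicit Arguments. Unset Strict Implicit. Unset Printing Implicit Defensive.
Import GRing.Theory.
Local Open Scope ring_scope.

(* Model of the free supercommutative algebra K[X;Y] = K[X] (x) E(Y),
   with X = {x1,x2,x1',x2'} and Y = {y1,y2,y1',y2'}.
   K[X] = {mpoly K[4]} with x1 = 'X_0, x2 = 'X_1, x1' = 'X_2, x2' = 'X_3.
   K[X;Y] is realized faithfully through its left regular representation
   on the free K[X]-module with basis the 16 monomials y_S (S subset of
   {0,1,2,3}, encoded by the bits of an index in 'I_16): K[X] acts by
   scalar matrices and y_i acts by the (signed) creation operator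
   y_i y_S = (-1)^{#{j in S | j < i}} y_{S u {i}} (or 0 if i in S).
   Thus SA K := 'M[{mpoly K[4]}]_16 is the ambient ring, and the
   relevant elements all lie in the subalgebra generated by K[X] and the y_i,
   which is isomorphic to K[X;Y]. *)

Definition SA (K : fieldType) := 'M[{mpoly K[4]}]_16.

Definition bitS (c : nat) (i : nat) : nat := odd (c %/ 2 ^ i).

Definition ygen (K : fieldType) (i : 'I_4) : SA K :=
  \matrix_(r < 16, c < 16)
    if (bitS c i == 0)%N && (val r == val c + 2 ^ i)%N
    then (-1) ^+ (\sum_(j < 4 | (j < i)%N) bitS c j)
    else 0.

Definition xgen (K : fieldType) (i : 'I_4) : SA K := ('X_i : {mpoly K[4]})%:M.

Definition polyS (K : fieldType) (p : {mpoly K[4]}) : SA K := p%:M.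

Definition y1 K := @ygen K (inord 0).
Definition y2 K := @ygen K (inord 1).
Definition y1' K := @ygen K (inord 2).
Definition y2' K := @ygen K (inord 3).
Definition x1 K := @xgen K (inord 0).
Definition x2 K := @xgen K (inord 1).
Definition x1' K := @xgen K (inord 2).
Definition x2' K := @xgen K (inord 3).

Definition mx2 (R : Type) (a b c d : R) : 'M[R]_2 :=
  \matrix_(i < 2, j < 2)
    if i == ord0 then (if j == ord0 then a else b)
    else (if j == ord0 then c else d).

Definition C1 K : 'M[SA K]_2 := mx2 (x1 K) (y1 K) (y1' K) (x1' K).
Definition C2 K : 'M[SA K]_2 := mx2 (x2 K) (y2 K) (y2' K) (x2' K).

Inductive inF (K : fieldType) : 'M[SA K]_2 -> Prop :=
  | inF_scal (k : K) : inF ((polyS (k%:MP))%:M)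
  | inF_C1 : inF (C1 K)
  | inF_C2 : inF (C2 K)
  | inF_add a b : inF a -> inF b -> inF (a + b)
  | inF_mul a b : inF a -> inF b -> inF (a * b).

Definition centralF K (a : 'M[SA K]_2) : Prop :=
  forall b, inF b -> a * b = b * a.

Definition strongly_centralF K (a : 'M[SA K]_2) : Prop :=
  centralF a /\ forall b, inF b -> centralF (a * b).

Definition h1 K : SA K := y1 K * y2 K * y1' K * y2' K.
Definition lY K : SA K := y1' K * (x2' K - x2 K) - y2' K * (x1' K - x1 K).
Definition rY K : SA K := y1 K * (x2' K - x2 K) - y2 K * (x1' K - x1 K).
Definition h2 K : SA K := y1 K * y2 K * lY K.
Definition h3 K : SA K := y1' K * y2' K * rY K.
Definition h4 K : SA K := lY K * rY K.

Definition A0 K : 'M[SA K]_2 := mx2 (h1 K) 0 0 (h1 K).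
Definition A1 K : 'M[SA K]_2 := mx2 0 0 0 (h1 K).
Definition A2 K : 'M[SA K]_2 := mx2 0 (h2 K) (- h3 K) (h4 K).
Definition A3 K : 'M[SA K]_2 := mx2 (h4 K) 0 0 (h4 K).

From HB Require Import structures.
From mathcomp Require Import all_boot all_order all_algebra.
From mathcomp Require Import mpoly.
From mathcomp Require Import ring.
From Stdlib Require PeanoNat.
Set Implicit Arguments. Unset Strict Implicit. Unset Printing Implicit Defensive.
Import GRing.Theory.
Local Open Scope ring_scope.

(* The identities a C1 = C1 a, a C2 = C2 a and a (C1 C2 - C2 C1) = 0 already
   make a strongly central.
   The Leibniz rule [bc, d] = b [c, d] + [b, d] c, with a central, propagates
   a [C1, C2] = 0 to a [b, c] = 0 for all b, c in F, and then
   (a b) c = a (c b) = c (a b).  The three identities hold in M_2(K[X;Y]) for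
   arbitrary alpha_i; they
   are checked in the basis of Grassmann monomials y_S, multiplying monomials
   symbolically and comparing coefficients with [ring]. *)

Section AnnihilatedCommutators.
Variables (R : pzRingType) (a : R).

Definition kills_comm (b c : R) : Prop := a * (b * c) = a * (c * b).

Lemma kills_comm_sym b c : kills_comm b c -> kills_comm c b.
Proof. exact: esym. Qed.

Lemma kills_commDl b b' c :
  kills_comm b c -> kills_comm b' c -> kills_comm (b + b') c.
Proof. by rewrite /kills_comm mulrDl mulrDr !mulrDr => -> ->. Qed.

(* [bc, d] = b [c, d] + [b, d] c, and a commutes past the factor b. *)
Lemma kills_commMl b c d : a * b = b * a ->
  kills_comm b d -> kills_comm c d -> kills_comm (b * c) d.
Proof.
move=> ab_ba bd cd; rewrite /kills_comm.
by rewrite -mulrA mulrA ab_ba -mulrA cd !mulrA -ab_ba -(mulrA a) bd !mulrA.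
Qed.

End AnnihilatedCommutators.

Lemma scalar_mx_comm (R : pzRingType) n (s : R) (B : 'M[R]_n) :
  (forall x, s * x = x * s) -> s%:M *m B = B *m s%:M.
Proof.
move=> s_central; rewrite mul_scalar_mx; apply/matrixP => i j.
rewrite !mxE (bigD1 j) //= big1 => [|k /negbTE neq_kj]; last first.
  by rewrite !mxE neq_kj mulr0.
by rewrite !mxE eqxx mulr1n addr0 s_central.
Qed.

Lemma scalarF_central (K : fieldType) (k : K) (B : 'M[SA K]_2) :
  (polyS k%:MP)%:M * B = B * (polyS k%:MP)%:M.
Proof. by apply: scalar_mx_comm => x; rewrite /polyS -!mulmxE scalar_mxC. Qed.

(* Goals between 2x2 matrices over K[X;Y] are closed with [exact] rather
   than [done]: the latter attempts conversion on the matrices, which is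
   prohibitively slow. *)
Section StrongCentrality.
Variables (K : fieldType) (a : 'M[SA K]_2).
Hypotheses (aC1 : a * C1 K = C1 K * a) (aC2 : a * C2 K = C2 K * a).
Hypothesis a_kills_comm12 : kills_comm a (C1 K) (C2 K).

Lemma central_of_generators : centralF a.
Proof.
move=> b; elim=> [k|||b1 b2 _ ab1 _ ab2|b1 b2 _ ab1 _ ab2].
- exact/esym/scalarF_central.
- exact: aC1.
- exact: aC2.
- rewrite mulrDr mulrDl ab1 ab2; exact: erefl.
- rewrite mulrA ab1 -mulrA ab2; exact: mulrA.
Qed.

Lemma kills_comm_scalar k c : kills_comm a (polyS k%:MP)%:M c.
Proof. rewrite /kills_comm scalarF_central; exact: erefl. Qed.

Lemma kills_comm_inF_r b :
  (forall k, kills_comm a b (polyS k%:MP)%:M) ->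
  kills_comm a b (C1 K) -> kills_comm a b (C2 K) ->
  forall c, inF c -> kills_comm a b c.
Proof.
move=> b_k b_C1 b_C2 c; elim=> [k|||c1 c2 _ b_c1 _ b_c2|c1 c2 inF_c1 b_c1 _ b_c2].
- exact: b_k.
- exact: b_C1.
- exact: b_C2.
- exact/kills_comm_sym/kills_commDl/kills_comm_sym/b_c2/kills_comm_sym/b_c1.
- apply/kills_comm_sym/kills_commMl; first exact: central_of_generators inF_c1.
  + exact/kills_comm_sym/b_c1.
  + exact/kills_comm_sym/b_c2.
Qed.

Lemma kills_comm_inF b c : inF b -> inF c -> kills_comm a b c.
Proof.
move=> inF_b; elim: inF_b c
  => [k|||b1 b2 inF_b1 b1_c _ b2_c|b1 b2 inF_b1 b1_c _ b2_c] c inF_c.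
- exact: kills_comm_scalar.
- apply: kills_comm_inF_r inF_c => [k||].
  + exact/kills_comm_sym/kills_comm_scalar.
  + exact: erefl.
  + exact: a_kills_comm12.
- apply: kills_comm_inF_r inF_c => [k||].
  + exact/kills_comm_sym/kills_comm_scalar.
  + exact/kills_comm_sym/a_kills_comm12.
  + exact: erefl.
- exact: kills_commDl (b1_c c inF_c) (b2_c c inF_c).
- exact: kills_commMl (central_of_generators inF_b1) (b1_c c inF_c) (b2_c c inF_c).
Qed.

Lemma strongly_central_of_generators : strongly_centralF a.
Proof.
split=> [|b inF_b c inF_c]; first exact: central_of_generators.
rewrite -mulrA (kills_comm_inF inF_b inF_c) mulrA (central_of_generators inF_c).
exact: esym (mulrA _ _ _).
Qed.

End StrongCentrality.

(* Subsets of {0,1,2,3} are encoded as bit masks S < 16. *)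
Definition subsetb (c r : nat) : bool := (Nat.land c r == c)%N.
Definition disjointb (S T : nat) : bool := (Nat.land S T == 0)%N.
Definition bit (S i : nat) : nat := Nat.testbit S i.

(* y_S y_T = (-1) ^+ inversions S T * y_(S u T) for disjoint S and T. *)
Definition inversions (S T : nat) : nat :=
  (bit S 1 * bit T 0 + bit S 2 * (bit T 0 + bit T 1)
   + bit S 3 * (bit T 0 + bit T 1 + bit T 2))%N.

Definition all16 (f : nat -> bool) : bool := all f (iota 0 16).

Lemma all16P f : all16 f -> forall n, (n < 16)%N -> f n.
Proof. by move=> /allP fP n lt_n16; apply: fP; rewrite mem_iota. Qed.

Lemma lxorK r S : Nat.lxor r (Nat.lxor r S) = S.
Proof.
by rewrite -PeanoNat.Nat.lxor_assoc PeanoNat.Nat.lxor_nilpotent PeanoNat.Nat.lxor_0_l.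
Qed.

Lemma lxor_lt16 : all16 (fun r => all16 (fun S => Nat.lxor r S < 16))%N.
Proof. by vm_compute. Qed.

(* The only intermediate index k in a product of monomial matrices is
   r xor S; this table records when it contributes, and with which sign. *)
Definition ymono_mul_table (r c S T : nat) : bool :=
  let k := Nat.lxor r S in
  let contributes := [&& disjointb S T, subsetb c r & Nat.lxor r c == Nat.lor S T]%N in
  ([&& subsetb k r, subsetb c k & Nat.lxor k c == T]%N == contributes)
  && (contributes ==> (odd (inversions S k + inversions T c)
                       == odd (inversions (Nat.lor S T) c + inversions S T))).

Lemma ymono_mul_tableP :
  all16 (fun r => all16 (fun c => all16 (fun S => all16 (ymono_mul_table r c S)))).
Proof. by vm_compute. Qed.

Inductive pexpr :=
  PVar of nat | P0 | P1 | PAdd of pexpr & pexpr | PMul of pexpr & pexpr | POpp of pexpr.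

Scheme Equality for pexpr.
HB.instance Definition _ := hasDecEq.Build pexpr (compareP pexpr_eq_dec).

Section MonomialMatrices.
Variable P : comNzRingType.

(* The matrix of left multiplication by p y_S in the basis (y_c)_c. *)
Definition ymono (S : nat) (p : P) : 'M[P]_16 :=
  \matrix_(r, c) if subsetb c r && (Nat.lxor r c == S)%N
                 then (-1) ^+ inversions S c * p else 0.

Lemma ymono_mul S T p q : (S < 16)%N -> (T < 16)%N ->
  ymono S p *m ymono T q =
  if disjointb S T then ymono (Nat.lor S T) ((-1) ^+ inversions S T * (p * q)) else 0.
Proof.
move=> lt_S16 lt_T16; apply/matrixP => r c; rewrite !mxE.
have lt_k16 : (Nat.lxor r S < 16)%N := all16P (all16P lxor_lt16 (ltn_ord r)) lt_S16.
rewrite (bigD1 (Ordinal lt_k16)) //= big1 ?addr0 => [|k neq_k]; last first.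
  rewrite !mxE; case: eqP => [rkS|]; last by rewrite andbF mul0r.
  by case/eqP: neq_k; apply: val_inj; rewrite /= -rkS lxorK.
have := all16P (all16P (all16P (all16P ymono_mul_tableP (ltn_ord r))
          (ltn_ord c)) lt_S16) lt_T16.
rewrite /ymono_mul_table !mxE /= lxorK eqxx andbT.
case: (disjointb S T); rewrite ?mxE;
  case: (subsetb _ r); case: (subsetb c _); case: (_ == T)%N;
  case: (subsetb c r); case: (Nat.lxor r c == _)%N => //= /eqP odd_eq;
  rewrite ?mul0r ?mulr0 //.
rewrite mulrACA [RHS]mulrA -!exprD; congr (_ * _).
by rewrite -[LHS]signr_odd odd_eq signr_odd.
Qed.

Lemma ymonoD S p q : ymono S (p + q) = ymono S p + ymono S q.
Proof.
by apply/matrixP => r c; rewrite !mxE; case: ifP; rewrite ?mulrDr ?addr0.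
Qed.

Lemma ymono0 S : ymono S 0 = 0.
Proof. by apply/matrixP => r c; rewrite !mxE; case: ifP; rewrite ?mulr0. Qed.

Lemma ymonoN S p : ymono S (- p) = - ymono S p.
Proof. by apply/matrixP => r c; rewrite !mxE; case: ifP; rewrite ?mulrN ?oppr0. Qed.

Lemma ymono_empty p : ymono 0 p = p%:M.
Proof.
apply/matrixP => r c; rewrite !mxE.
have : all16 (fun r => all16 (fun c =>
         (subsetb c r && (Nat.lxor r c == 0)%N) == (r == c)%N)) by vm_compute.
move=> /all16P /(_ _ (ltn_ord r)) /all16P /(_ _ (ltn_ord c)) /eqP ->.
by rewrite /inversions /bit /= expr0 mul1r mulrb.
Qed.

Variable env : nat -> P.

Fixpoint peval (e : pexpr) : P :=
  match e with
  | PVar n => env n | P0 => 0 | P1 => 1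
  | PAdd e1 e2 => peval e1 + peval e2
  | PMul e1 e2 => peval e1 * peval e2
  | POpp e1 => - peval e1
  end.

(* Sums of monomials p y_S, with symbolic coefficients so that products can
   be normalised by computation and compared coefficientwise by [ring]. *)
Definition ypoly := seq (nat * pexpr).

Definition ymonos (l : ypoly) : 'M[P]_16 := \sum_(m <- l) ymono m.1 (peval m.2).

Definition ypoly_wf (l : ypoly) : bool := all (fun m => m.1 < 16)%N l.

Definition sign_pexpr (n : nat) (e : pexpr) : pexpr := if odd n then POpp e else e.

Definition ypoly_mul (l1 l2 : ypoly) : ypoly :=
  flatten [seq if disjointb m1.1 m2.1
               then [:: (Nat.lor m1.1 m2.1, sign_pexpr (inversions m1.1 m2.1) (PMul m1.2 m2.2))]
               else [::] | m1 <- l1, m2 <- l2].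

Definition ypoly_opp (l : ypoly) : ypoly := [seq (m.1, POpp m.2) | m <- l].

Fixpoint ypoly_coef (l : ypoly) (S : nat) : pexpr :=
  if l is m :: l' then
    if (m.1 == S)%N then PAdd m.2 (ypoly_coef l' S) else ypoly_coef l' S
  else P0.

Lemma ymonos_nil : ymonos [::] = 0.
Proof. by rewrite /ymonos big_nil. Qed.

Lemma ymonos_single S e : ymonos [:: (S, e)] = ymono S (peval e).
Proof. by rewrite /ymonos big_seq1. Qed.

Lemma ymonos_add l1 l2 : ymonos l1 + ymonos l2 = ymonos (l1 ++ l2).
Proof. by rewrite /ymonos big_cat. Qed.

Lemma ymonos_opp l : - ymonos l = ymonos (ypoly_opp l).
Proof. by rewrite /ymonos big_map -sumrN; apply: eq_bigr => m _; rewrite ymonoN. Qed.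

Lemma ymonos_mul l1 l2 : ypoly_wf l1 -> ypoly_wf l2 ->
  ymonos l1 * ymonos l2 = ymonos (ypoly_mul l1 l2).
Proof.
rewrite /ypoly_wf => /allP ok1 /allP ok2.
rewrite /ymonos big_flatten big_allpairs_dep mulr_suml; apply: eq_big_seq => m1 m1l1.
rewrite mulr_sumr; apply: eq_big_seq => m2 m2l2.
rewrite -mulmxE ymono_mul ?(ok1 _ m1l1) ?(ok2 _ m2l2) //; case: ifP => _; last by rewrite big_nil.
by rewrite big_seq1 /= /sign_pexpr -signr_odd; case: odd; rewrite ?mulN1r ?mul1r.
Qed.

Lemma peval_coef_cons m l S :
  peval (ypoly_coef (m :: l) S) =
  (if (m.1 == S)%N then peval m.2 else 0) + peval (ypoly_coef l S).
Proof. by rewrite /=; case: eqP; rewrite ?add0r. Qed.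

Lemma ymonos_coef l : ypoly_wf l ->
  ymonos l = \sum_(S < 16) ymono S (peval (ypoly_coef l S)).
Proof.
elim: l => [_|m l IHl /andP[lt_m16 ok_l]].
  by rewrite /ymonos big_nil big1 // => S _; rewrite ymono0.
rewrite /ymonos big_cons -/(ymonos l) IHl //.
under [RHS]eq_bigr do rewrite peval_coef_cons ymonoD.
rewrite big_split /=; congr (_ + _).
rewrite (bigD1 (Ordinal lt_m16)) //= eqxx big1 ?addr0 // => S neq_Sm.
by case: eqP => [m_S|]; rewrite ?ymono0 //; case/eqP: neq_Sm; apply: val_inj.
Qed.

Lemma ymonos_eq l1 l2 : ypoly_wf l1 -> ypoly_wf l2 ->
  (forall S, (S < 16)%N -> peval (ypoly_coef l1 S) = peval (ypoly_coef l2 S)) ->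
  ymonos l1 = ymonos l2.
Proof.
move=> ok1 ok2 coef_eq; rewrite !ymonos_coef //.
by apply: eq_bigr => S _; rewrite coef_eq.
Qed.

End MonomialMatrices.

Ltac ypoly_normalize :=
  repeat first [ rewrite ymonos_mul; [| by vm_compute | by vm_compute]
               | rewrite ymonos_add | rewrite ymonos_opp ].

Ltac ypoly_coef_ring :=
  match goal with |- peval ?env ?e1 = peval ?env ?e2 =>
    let e1' := eval vm_compute in e1 in let e2' := eval vm_compute in e2 in
    change (peval env e1' = peval env e2'); cbn [peval]; ring
  end.

Ltac ypoly_solve :=
  apply: ymonos_eq; [by vm_compute | by vm_compute |];
  do 16 (case=> [_|]; [ypoly_coef_ring|]);
  move=> ?; rewrite !ltnS ltn0 => ?; discriminate.

Definition bits_below (c i : nat) : nat :=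
  ((if 0 < i then bitS c 0 else 0) + (if 1 < i then bitS c 1 else 0) +
   (if 2 < i then bitS c 2 else 0) + (if 3 < i then bitS c 3 else 0))%N.

Lemma bits_belowE c (i : 'I_4) : (\sum_(j < 4 | (j < i)%N) bitS c j)%N = bits_below c i.
Proof. by rewrite big_mkcond !big_ord_recl big_ord0 /= addn0 !addnA. Qed.

Definition ygen_table (i r c : nat) : bool :=
  let nonzero := ((bitS c i == 0) && (r == c + 2 ^ i))%N in
  (nonzero == subsetb c r && (Nat.lxor r c == 2 ^ i)%N)
  && (nonzero ==> (odd (bits_below c i) == odd (inversions (2 ^ i) c))).

Lemma ygen_tableP : all (fun i => all16 (fun r => all16 (ygen_table i r))) (iota 0 4).
Proof. by vm_compute. Qed.

Lemma ygen_ymono (K : fieldType) (i : 'I_4) : ygen K i = ymono (2 ^ i) 1.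
Proof.
apply/matrixP => r c; rewrite !mxE bits_belowE.
have i_iota : nat_of_ord i \in iota 0 4 by rewrite mem_iota /=.
have := all16P (all16P (allP ygen_tableP _ i_iota) (ltn_ord r)) (ltn_ord c).
rewrite /ygen_table /= mulr1 => /andP[/eqP <- /implyP odd_eq].
case: ifP => // /odd_eq /eqP odd_eq'.
by rewrite -signr_odd odd_eq' signr_odd.
Qed.

Lemma ygen_ypoly (K : fieldType) (env : nat -> {mpoly K[4]}) (i : nat) : (i < 4)%N ->
  ygen K (inord i) = ymonos env [:: ((2 ^ i)%N, P1)].
Proof. by move=> lt_i4; rewrite ymonos_single ygen_ymono inordK. Qed.

Lemma scalar_ypoly (K : fieldType) (env : nat -> {mpoly K[4]}) n (p : {mpoly K[4]}) :
  env n = p -> p%:M = ymonos env [:: (0%N, PVar n)] :> SA K.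
Proof. by move=> env_n; rewrite ymonos_single ymono_empty /= env_n. Qed.

Ltac ypoly_reify env :=
  rewrite /h1 /h2 /h3 /h4 /lY /rY /y1 /y2 /y1' /y2' /x1 /x2 /x1' /x2' /xgen /polyS;
  rewrite ?(@ygen_ypoly _ env 0 erefl) ?(@ygen_ypoly _ env 1 erefl)
          ?(@ygen_ypoly _ env 2 erefl) ?(@ygen_ypoly _ env 3 erefl);
  rewrite ?(@scalar_ypoly _ env 0 _ erefl) ?(@scalar_ypoly _ env 1 _ erefl)
          ?(@scalar_ypoly _ env 2 _ erefl) ?(@scalar_ypoly _ env 3 _ erefl)
          ?(@scalar_ypoly _ env 4 _ erefl) ?(@scalar_ypoly _ env 5 _ erefl)
          ?(@scalar_ypoly _ env 6 _ erefl) ?(@scalar_ypoly _ env 7 _ erefl).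

Lemma mx2_mul (R : pzRingType) (a b c d a' b' c' d' : R) :
  mx2 a b c d * mx2 a' b' c' d' =
  mx2 (a * a' + b * c') (a * b' + b * d') (c * a' + d * c') (c * b' + d * d').
Proof.
apply/matrixP => i j; rewrite !mxE !big_ord_recl big_ord0 !mxE addr0 /=.
by case: i => [[|[|//]]] ?; case: j => [[|[|//]]] ?.
Qed.

Lemma mx2_add (R : pzRingType) (a b c d a' b' c' d' : R) :
  mx2 a b c d + mx2 a' b' c' d' = mx2 (a + a') (b + b') (c + c') (d + d').
Proof.
apply/matrixP => i j; rewrite !mxE /=.
by case: i => [[|[|//]]] ?; case: j => [[|[|//]]] ?.
Qed.

Lemma mx2_scale (R : pzRingType) (s a b c d : R) :
  s *: mx2 a b c d = mx2 (s * a) (s * b) (s * c) (s * d).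
Proof.
apply/matrixP => i j; rewrite !mxE /=.
by case: i => [[|[|//]]] ?; case: j => [[|[|//]]] ?.
Qed.

Lemma mx2_congr (T : Type) (a b c d a' b' c' d' : T) :
  a = a' -> b = b' -> c = c' -> d = d' -> mx2 a b c d = mx2 a' b' c' d'.
Proof. by move=> -> -> -> ->. Qed.

Section Identities.
Variables (K : fieldType) (al0 al1 al2 al3 : {mpoly K[4]}).

(* Variables 0-3 of coefficient expressions are x1, x2, x1', x2', and
   variables 4-7 are the alpha_i. *)
Let env : nat -> {mpoly K[4]} :=
  nth 0 [:: 'X_(inord 0); 'X_(inord 1); 'X_(inord 2); 'X_(inord 3); al0; al1; al2; al3].

Let a : 'M[SA K]_2 :=
  polyS al0 *: A0 K + polyS al1 *: A1 K + polyS al2 *: A2 K + polyS al3 *: A3 K.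

Lemma a_C1_comm : a * C1 K = C1 K * a.
Proof.
rewrite /a /C1 /A0 /A1 /A2 /A3 -!(ymonos_nil env) !mx2_scale !mx2_add !mx2_mul.
by apply: mx2_congr; ypoly_reify env; ypoly_normalize; ypoly_solve.
Qed.

Lemma a_C2_comm : a * C2 K = C2 K * a.
Proof.
rewrite /a /C2 /A0 /A1 /A2 /A3 -!(ymonos_nil env) !mx2_scale !mx2_add !mx2_mul.
by apply: mx2_congr; ypoly_reify env; ypoly_normalize; ypoly_solve.
Qed.

Lemma a_kills_comm12 : kills_comm a (C1 K) (C2 K).
Proof.
rewrite /kills_comm /a /C1 /C2 /A0 /A1 /A2 /A3 -!(ymonos_nil env) !mx2_scale !mx2_add !mx2_mul.
by apply: mx2_congr; ypoly_reify env; ypoly_normalize; ypoly_solve.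
Qed.

End Identities.

Theorem lemma5 (K : fieldType)
  (K_infinite : forall s : seq K, exists x : K, x \notin s)
  (K_char_not2 : (2%:R : K) != 0)
  (al0 al1 al2 al3 : {mpoly K[4]}) :
  let a : 'M[SA K]_2 :=
    polyS al0 *: A0 K + polyS al1 *: A1 K + polyS al2 *: A2 K + polyS al3 *: A3 K in
  inF a -> strongly_centralF a.
Proof.
move=> a _; apply: strongly_central_of_generators.
- exact: a_C1_comm.
- exact: a_C2_comm.
- exact: a_kills_comm12.
Qed.
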